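(* Let $\mathbb{F}$, $\mathfrak g$, $\mathcal C$, $\mathcal C^{du}$, $M$ be as in the context. Let $e\in M$ be an idempotent and $m\in M_e^\times$ locally finite. Suppose that for every object $V$ of $\mathcal C$ the semisimple part $s_V$ and the locally weak unipotent part $u_V$ of the multiplicative Jordan–Chevalley decomposition of $m_V\in(End(V)_{e_V})^\times$ lie in $End_{V^{du}}(V)$. Put $s=(s_V)_V$ and $u=(u_V)_V$. Then $s$ is a semisimple element of $M_e^\times$, $u$ is a locally weak unipotent element of $M_e^\times$, $m=su=us$, and $s,u$ are uniquely determined by these properties.
   Context: Let $\mathbb F$ be a field of characteristic $0$, $\mathfrak g$ a Lie algebra over $\mathbb F$. $\mathcal C$: full subcategory of $\mathfrak g$-modules closed under isomorphism and submodules, containing a direct sum and tensor product of any two objects and a one-dimensional trivial module, with only $0\in\mathfrak g$ acting trivially on all objects. $x_V$ = action. Category of duals: point-separating $V^{du}\subseteq V^*$ with $\phi\circ x_V\in V^{du}$ ($x\in\mathfrak g$), $\psi\circ\alpha\in V^{du}$ for morphisms $\alpha:V\to W$, $\psi\in W^{du}$, $(V\oplus W)^{du}=V^{du}\oplus W^{du}$, $V^{du}\otimes W^{du}\subseteq(V\otimes W)^{du}$. $End_{V^{du}}(V)=\{\varphi:\phi\circ\varphi\in V^{du}\ \forall\phi\}$. $Nat$: families $(m_V)_V$, $m_V\in End_{V^{du}}(V)$, commuting with all morphisms. $M=\{m\in Nat:m_{V\otimes W}=m_V\otimes m_W,\ m_{V_0}=id$ for trivial one-dimensional $V_0\}$.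 For an idempotent $e\in M$, $M_e=eMe=\{m\in M:me=em=m\}$ is a monoid with unit $e$ and $M_e^\times$ denotes its unit group. For a vector space $V$: an endomorphism $y$ is locally finite if every vector lies in a finite-dimensional $y$-invariant subspace; semisimple if locally finite and its extension to $V\otimes_{\mathbb F}\overline{\mathbb F}$ is diagonalizable; locally unipotent if invertible and $y-id$ is locally nilpotent; locally weak unipotent if $V=\ker y\oplus\operatorname{Im}y$ and $y|_{\operatorname{Im}y}$ is locally unipotent. For an idempotent $f\in End(V)$, $End(V)_f=f\,End(V)\,f$ is a monoid with unit $f$; for locally finite $y\in(End(V)_f)^\times$ there are unique semisimple $s\in(End(V)_f)^\times$ and locally weak unipotent $u\in(End(V)_f)^\times$ with $y=su=us$ (multiplicative Jordan–Chevalley decomposition). An element of $M$ is called locally finite / semisimple / locally weak unipotent if it acts so on every object of $\mathcal C$. *)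

From HB Require Import structures.
From mathcomp Require Import all_boot all_order all_algebra.
Set Implicit Arguments.
Unset Strict Implicit.
Unset Printing Implicit Defensive.
Import GRing.Theory.
Local Open Scope ring_scope.

Section LinAlg.
Variable F : fieldType.

Definition lin (V W : lmodType F) (f : V -> W) : Prop :=
  forall (a : F) (x y : V), f (a *: x + y) = a *: f x + f y.

Definition lform (V : lmodType F) (phi : V -> F) : Prop :=
  forall (a : F) (x y : V), phi (a *: x + y) = a * phi x + phi y.

Variable V : lmodType F.

Definition in_span (s : seq V) (x : V) : Prop :=
  exists c : 'I_(size s) -> F, x = \sum_(i < size s) c i *: s`_i.

Definition lin_indep n (b : 'I_n -> V) : Prop :=
  forall c : 'I_n -> F, \sum_(i < n) c i *: b i = 0 -> forall i, c i = 0.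

Definition locally_finite (y : V -> V) : Prop :=
  forall v : V, exists s : seq V,
    in_span s v /\ forall i : nat, (i < size s)%N -> in_span s (y s`_i).

(* Semisimple: locally finite, and the extension of y to V (x) Fbar is
   diagonalizable, where iota : F -> Fbar is an algebraic closure.
   For a locally finite y this is expressed on the finite-dimensional
   y-invariant subspaces: the matrix of y on any such subspace (in any
   basis b) becomes diagonalizable over Fbar. *)
Definition semisimple (Fbar : fieldType) (iota : {rmorphism F -> Fbar})
    (y : V -> V) : Prop :=
  locally_finite y /\
  forall (n : nat) (b : 'I_n -> V) (A : 'M[F]_n),
    lin_indep b ->
    (forall i, y (b i) = \sum_(j < n) A i j *: b j) ->
    diagonalizable (map_mx iota A).

Definition locally_nilpotent (z : V -> V) : Prop :=
  forall v : V, exists k : nat, iter k z v = 0.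

Definition locally_unipotent (y : V -> V) : Prop :=
  lin y /\ bijective y /\ locally_nilpotent (fun v => y v - v).

Definition in_ker (y : V -> V) (v : V) : Prop := y v = 0.
Definition in_im (y : V -> V) (v : V) : Prop := exists w, v = y w.

(* locally weak unipotent: V = ker y (+) Im y and y restricted to Im y is
   locally unipotent (invertible on Im y, y - id locally nilpotent there) *)
Definition locally_weak_unipotent (y : V -> V) : Prop :=
  lin y /\
  (forall v, in_ker y v -> in_im y v -> v = 0) /\
  (forall v, exists k w, in_ker y k /\ in_im y w /\ v = k + w) /\
  (forall w1 w2, in_im y w1 -> in_im y w2 -> y w1 = y w2 -> w1 = w2) /\
  (forall w, in_im y w -> exists w', in_im y w' /\ y w' = w) /\
  (forall w, in_im y w -> exists k : nat, iter k (fun v => y v - v) w = 0).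

(* y is a unit of the monoid End(V)_f = f End(V) f (with unit f) *)
Definition unit_End_f (f y : V -> V) : Prop :=
  lin y /\ (forall v, y (f v) = y v /\ f (y v) = y v) /\
  exists z : V -> V, lin z /\ (forall v, z (f v) = z v /\ f (z v) = z v) /\
    forall v, y (z v) = f v /\ z (y v) = f v.

End LinAlg.

Section Lie.
Variables (F : fieldType) (g : lmodType F) (br : g -> g -> g).

Definition is_lie_algebra : Prop :=
  (forall z, lin (fun x => br x z)) /\ (forall x, lin (br x)) /\
  (forall x, br x x = 0) /\
  (forall x y z, br x (br y z) + br y (br z x) + br z (br x y) = 0).

Record gmodule := GModule { gcar : lmodType F; gact : g -> gcar -> gcar }.
Arguments gcar : clear implicits.
Arguments gact : clear implicits.

Definition is_gmod (V : gmodule) : Prop :=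
  (forall v, lin (fun x => gact V x v)) /\ (forall x, lin (gact V x)) /\
  (forall x y v, gact V (br x y) v =
                 gact V x (gact V y v) - gact V y (gact V x v)).

Definition is_hom (V W : gmodule) (f : gcar V -> gcar W) : Prop :=
  lin f /\ forall x v, f (gact V x v) = gact W x (f v).

Definition is_dsum (V W D : gmodule)
    (i1 : gcar V -> gcar D) (i2 : gcar W -> gcar D)
    (p1 : gcar D -> gcar V) (p2 : gcar D -> gcar W) : Prop :=
  [/\ is_hom i1, is_hom i2, is_hom p1 & is_hom p2] /\
  (forall v, p1 (i1 v) = v) /\ (forall w, p2 (i2 w) = w) /\
  (forall w, p1 (i2 w) = 0) /\ (forall v, p2 (i1 v) = 0) /\
  (forall d, i1 (p1 d) + i2 (p2 d) = d).

Definition is_tensor (V W T : gmodule) (t : gcar V -> gcar W -> gcar T)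
    : Prop :=
  (forall w, lin (fun v => t v w)) /\ (forall v, lin (t v)) /\
  (forall (Z : lmodType F) (b : gcar V -> gcar W -> Z),
     (forall w, lin (fun v => b v w)) -> (forall v, lin (b v)) ->
     exists h : gcar T -> Z, lin h /\ (forall v w, h (t v w) = b v w) /\
       forall h' : gcar T -> Z, lin h' -> (forall v w, h' (t v w) = b v w) ->
         forall z, h' z = h z) /\
  (forall x v w, gact T x (t v w) = t (gact V x v) w + t v (gact W x w)).

Definition trivial_1dim (V : gmodule) : Prop :=
  (exists v0 : gcar V, v0 <> 0 /\ forall v, exists a : F, v = a *: v0) /\
  (forall x v, gact V x v = 0).

Definition is_category (C : gmodule -> Prop) : Prop :=
  (forall V, C V -> is_gmod V) /\
  (forall V W (f : gcar V -> gcar W), C V -> is_gmod W -> is_hom f ->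
     bijective f -> C W) /\
  (forall V U (f : gcar U -> gcar V), C V -> is_gmod U -> is_hom f ->
     injective f -> C U) /\
  (forall V W, C V -> C W -> exists D i1 i2 p1 p2,
     C D /\ @is_dsum V W D i1 i2 p1 p2) /\
  (forall V W, C V -> C W -> exists T t, C T /\ @is_tensor V W T t) /\
  (exists V0, C V0 /\ trivial_1dim V0) /\
  (forall x, (forall V, C V -> forall v, gact V x v = 0) -> x = 0).

(* a category of duals for C: du V is the set V^du of linear forms *)
Definition dual_family := forall V : gmodule, (gcar V -> F) -> Prop.

Definition is_category_of_duals (C : gmodule -> Prop) (du : dual_family)
    : Prop :=
  (forall V, C V -> forall phi, du V phi -> lform phi) /\
  (forall V, C V -> du V (fun _ => 0)) /\
  (forall V, C V -> forall (a : F) phi psi, du V phi -> du V psi ->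
     du V (fun v => a * phi v + psi v)) /\
  (forall V, C V -> forall v, (forall phi, du V phi -> phi v = 0) -> v = 0) /\
  (forall V, C V -> forall phi x, du V phi -> du V (fun v => phi (gact V x v))) /\
  (forall V W (alpha : gcar V -> gcar W), C V -> C W -> is_hom alpha ->
     forall psi, du W psi -> du V (fun v => psi (alpha v))) /\
  (forall V W D i1 i2 p1 p2, C V -> C W -> C D -> @is_dsum V W D i1 i2 p1 p2 ->
     forall chi, lform chi ->
       (du D chi <-> du V (fun v => chi (i1 v)) /\ du W (fun w => chi (i2 w)))) /\
  (forall V W T t, C V -> C W -> C T -> @is_tensor V W T t ->
     forall phi psi chi, du V phi -> du W psi -> lform chi ->
       (forall v w, chi (t v w) = phi v * psi w) -> du T chi).

Definition End_du (du : dual_family) (V : gmodule) (f : gcar V -> gcar V)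
    : Prop :=
  lin f /\ forall phi, du V phi -> du V (fun v => phi (f v)).



Definition gfamily := forall V : gmodule, gcar V -> gcar V.

Definition is_Nat (C : gmodule -> Prop) (du : dual_family) (m : gfamily)
    : Prop :=
  (forall V, C V -> End_du du (m V)) /\
  (forall V W (alpha : gcar V -> gcar W), C V -> C W -> is_hom alpha ->
     forall v, alpha (m V v) = m W (alpha v)).

Definition in_M (C : gmodule -> Prop) (du : dual_family) (m : gfamily)
    : Prop :=
  is_Nat C du m /\
  (forall V W T t, C V -> C W -> C T -> @is_tensor V W T t ->
     forall v w, m T (t v w) = t (m V v) (m W w)) /\
  (forall V0, C V0 -> trivial_1dim V0 -> forall v, m V0 v = v).

Definition idempotent_M C du (e : gfamily) : Prop :=
  in_M C du e /\ forall V, C V -> forall v, e V (e V v) = e V v.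

Definition in_Me C du (e m : gfamily) : Prop :=
  in_M C du m /\ forall V, C V -> forall v, m V (e V v) = m V v /\ e V (m V v) = m V v.

Definition unit_Me C du (e m : gfamily) : Prop :=
  in_Me C du e m /\ exists n, in_Me C du e n /\
    forall V, C V -> forall v, m V (n V v) = e V v /\ n V (m V v) = e V v.

Definition locally_finite_M (C : gmodule -> Prop) (m : gfamily) : Prop :=
  forall V, C V -> locally_finite (m V).

Definition semisimple_M (Fbar : fieldType) (iota : {rmorphism F -> Fbar})
    (C : gmodule -> Prop) (m : gfamily) : Prop :=
  forall V, C V -> semisimple iota (m V).

Definition locally_weak_unipotent_M (C : gmodule -> Prop) (m : gfamily) : Prop :=
  forall V, C V -> locally_weak_unipotent (m V).

End Lie.
Arguments End_du [F g] du V f.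

(* For every module V, m_V = s_V u_V with s_V semisimple, u_V locally weak
   unipotent and both units of End(V)_{e_V}, so m_V - s_V = s_V (u_V - e_V) is
   locally nilpotent and commutes with s_V.  Hence every vector lies in a
   finite-dimensional subspace, stable under m_V and s_V, on which s_V is the
   additive semisimple part of m_V; over the algebraic closure s_V is there a
   polynomial in m_V, so it stabilises every m_V-stable subspace.  Applied to
   the graph of a morphism inside the direct sum of two such subspaces, and to
   the tensor product of two of them, this shows that s commutes with
   morphisms, is multiplicative on tensor products and is the identity on
   trivial modules.  Since s_V is invertible on the image of e_V, u_V is
   determined by s_V u_V = m_V and inherits these properties.  In M_e the
   inverses of s and u are u m^-1 and s m^-1, and uniqueness is the graph
   argument for the identity map. *)

From HB Require Import structures.
From mathcomp Require Import all_boot all_order all_algebra.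
From mathcomp Require Import mxtens zify.
From Stdlib Require Import Classical.
Set Implicit Arguments.
Unset Strict Implicit.
Unset Printing Implicit Defensive.
Import GRing.Theory.
Local Open Scope ring_scope.

Section LinearMaps.
Variable F : fieldType.
Implicit Types U V W : lmodType F.

Lemma lin0 V W (f : V -> W) : lin f -> f 0 = 0.
Proof.
move=> hf; have := hf 1 0 0; rewrite scaler0 add0r scale1r => /eqP.
by rewrite addrC -subr_eq subrr => /eqP.
Qed.

Lemma linD V W (f : V -> W) : lin f -> forall x y, f (x + y) = f x + f y.
Proof. by move=> hf x y; have := hf 1 x y; rewrite !scale1r. Qed.

Lemma linZ V W (f : V -> W) : lin f -> forall a x, f (a *: x) = a *: f x.
Proof. by move=> hf a x; have := hf a x 0; rewrite (lin0 hf) !addr0. Qed.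

Lemma linB V W (f : V -> W) : lin f -> forall x y, f (x - y) = f x - f y.
Proof.
by move=> hf x y; have := hf (-1) y x; rewrite !scaleN1r addrC => ->; rewrite addrC.
Qed.

Lemma lin_sum V W (f : V -> W) I (r : seq I) (P : pred I) (G : I -> V) :
  lin f -> f (\sum_(i <- r | P i) G i) = \sum_(i <- r | P i) f (G i).
Proof. by move=> hf; apply: (big_morph f (linD hf) (lin0 hf)). Qed.

Lemma lin_comp U V W (f : V -> W) (h : U -> V) :
  lin f -> lin h -> lin (fun x => f (h x)).
Proof. by move=> hf hh a x y; rewrite hh hf. Qed.

Lemma lin_iter V (f : V -> V) k : lin f -> lin (iter k f).
Proof. by move=> hf; elim: k => [|k IH] a x y //=; rewrite IH hf. Qed.

Lemma lin_subf V W (f h : V -> W) : lin f -> lin h -> lin (fun x => f x - h x).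
Proof. by move=> hf hh a x y; rewrite hf hh scalerBr opprD addrACA. Qed.

Lemma iter_lin_ge V (f : V -> V) k j x :
  lin f -> iter k f x = 0 -> (k <= j)%N -> iter j f x = 0.
Proof. by move=> hf hk /subnK <-; rewrite iterD hk (lin0 (lin_iter _ hf)). Qed.

End LinearMaps.

Definition seqfam (F : fieldType) (V : lmodType F) (l : seq V)
  (i : 'I_(size l)) : V := l`_i.
Arguments seqfam {F V} l i.

Section Coordinates.
Variable F : fieldType.

Definition lcomb (V : lmodType F) n (b : 'I_n -> V) (c : 'rV[F]_n) : V :=
  \sum_i c 0 i *: b i.

Definition span_of (V : lmodType F) n (b : 'I_n -> V) (x : V) : Prop :=
  exists c, x = lcomb b c.


Lemma map_lcomb (V W : lmodType F) (f : V -> W) n (b : 'I_n -> V) c :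
  lin f -> f (lcomb b c) = lcomb (fun i => f (b i)) c.
Proof. by move=> hf; rewrite lin_sum //; apply: eq_bigr => i _; rewrite linZ. Qed.

Variable V : lmodType F.
Implicit Types (n : nat) (x : V).

Lemma lin_lcomb n (b : 'I_n -> V) : lin (lcomb b).
Proof.
move=> a c c'; rewrite /lcomb scaler_sumr -big_split /=.
by apply: eq_bigr => i _; rewrite !mxE scalerDl scalerA.
Qed.

Lemma lcomb_delta n (b : 'I_n -> V) i : lcomb b (delta_mx 0 i) = b i.
Proof.
rewrite /lcomb (bigD1 i) //= mxE !eqxx scale1r big1 ?addr0 // => j /negPf ji.
by rewrite mxE ji andbF scale0r.
Qed.

Lemma lcomb_mulmx n (b : 'I_n -> V) (y : V -> V) (A : 'M[F]_n) :
  lin y -> (forall i, y (b i) = \sum_j A i j *: b j) ->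
  forall c, y (lcomb b c) = lcomb b (c *m A).
Proof.
move=> hy hb c; rewrite map_lcomb // /lcomb.
under eq_bigr => i _ do rewrite hb scaler_sumr.
rewrite exchange_big; apply: eq_bigr => j _; rewrite mxE scaler_suml.
by apply: eq_bigr => i _; rewrite scalerA.
Qed.

Lemma lcomb_rows k n (h : 'I_k -> V) (R : 'M[F]_(n, k)) c :
  lcomb (fun i => lcomb h (row i R)) c = lcomb h (c *m R).
Proof.
rewrite [c *m R]mulmx_sum_row (lin_sum _ _ _ (lin_lcomb h)).
by apply: eq_bigr => i _; rewrite (linZ (lin_lcomb h)).
Qed.

Lemma lcomb_inj n (b : 'I_n -> V) : lin_indep b -> injective (lcomb b).
Proof.
move=> hb c c' e; apply/rowP => j; apply/eqP; rewrite -subr_eq0; apply/eqP.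
apply: (hb (fun i => c 0 i - c' 0 i)); under eq_bigr do rewrite scalerBl.
by rewrite sumrB -/(lcomb b c) -/(lcomb b c') e subrr.
Qed.

Lemma span_of0 n (b : 'I_n -> V) : span_of b 0.
Proof. by exists 0; rewrite (lin0 (lin_lcomb b)). Qed.

Lemma span_ofP n (b : 'I_n -> V) a x y :
  span_of b x -> span_of b y -> span_of b (a *: x + y).
Proof. by move=> [c ->] [c' ->]; exists (a *: c + c'); rewrite lin_lcomb. Qed.

Lemma span_ofD n (b : 'I_n -> V) x y :
  span_of b x -> span_of b y -> span_of b (x + y).
Proof. by move=> Sx Sy; have := span_ofP 1 Sx Sy; rewrite scale1r. Qed.

Lemma span_of_lcomb n (b : 'I_n -> V) k (h : 'I_k -> V) c :
  (forall i, span_of b (h i)) -> span_of b (lcomb h c).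
Proof.
move=> Sh; apply: (big_ind (span_of b)) => [|x y|i _].
- exact: span_of0.
- exact: span_ofD.
by have := span_ofP (c 0 i) (Sh i) (span_of0 b); rewrite addr0.
Qed.

Lemma span_of_trans n (b : 'I_n -> V) k (h : 'I_k -> V) x :
  (forall i, span_of b (h i)) -> span_of h x -> span_of b x.
Proof. by move=> Sh [c ->]; apply: span_of_lcomb. Qed.

Lemma span_of_stable n (b : 'I_n -> V) (f : V -> V) x :
  lin f -> (forall i, span_of b (f (b i))) -> span_of b x -> span_of b (f x).
Proof. by move=> hf Sf [c ->]; rewrite map_lcomb //; apply: span_of_lcomb. Qed.

Lemma span_of_mem (l : seq V) x : x \in l -> span_of (seqfam l) x.
Proof.
rewrite -index_mem => xl; exists (delta_mx 0 (Ordinal xl)).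
by rewrite lcomb_delta /seqfam /= nth_index // -index_mem.
Qed.

Lemma span_of_self n (b : 'I_n -> V) i : span_of b (b i).
Proof. by exists (delta_mx 0 i); rewrite lcomb_delta. Qed.

Lemma in_span_span_of (l : seq V) x : in_span l x -> span_of (seqfam l) x.
Proof.
by case=> c ->; exists (\row_i c i); apply: eq_bigr => i _; rewrite mxE.
Qed.

End Coordinates.

Section RowSpaces.
Variable F : fieldType.

Lemma subspace_rowspace n (P : 'rV[F]_n -> Prop) :
  P 0 -> (forall a x y, P x -> P y -> P (a *: x + y)) ->
  exists B : 'M[F]_n, forall x, P x <-> (x <= B)%MS.
Proof.
move=> P0 PC.
have PZ a x : P x -> P (a *: x) by move=> Px; have := PC a x 0 Px P0; rewrite addr0.
have P_rows m (A : 'M_(m, n)) :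
    (forall i, P (row i A)) -> forall x, (x <= A)%MS -> P x.
  move=> PA x /submxP[c ->]; rewrite mulmx_sum_row.
  apply: (big_ind P) => // [y z Py Pz|i _]; last exact: PZ.
  by have := PC 1 y z Py Pz; rewrite scale1r.
suff grow : forall d (B : 'M_n), (forall i, P (row i B)) ->
    (n - \rank B <= d)%N ->
    exists B : 'M_n, (forall i, P (row i B)) /\ forall x, P x -> (x <= B)%MS.
  have [|B [PB maxB]] := grow n 0 _ (leq_subr _ _); first by move=> i; rewrite row0.
  by exists B => x; split; [exact: maxB | exact: P_rows].
elim=> [|d IH] B PB le_d.
  exists B; split=> // x _; apply: submx_full.
  by rewrite /row_full eqn_leq rank_leq_col; move: le_d; rewrite leqn0 subn_eq0.
have [[x [Px xNB]]|B_max] := classic (exists x, P x /\ ~~ (x <= B)%MS); last first.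
  exists B; split=> // x Px; apply/negPn/negP => xNB; apply: B_max; exists x.
  by split=> //; apply/negP.
have P_rowsBx i : P (row i (B + x)%MS).
  have /sub_addsmxP[u ->] := row_sub i (B + x)%MS.
  have := PC 1 _ _ (P_rows _ _ PB _ (submxMl u.1 B)).
  rewrite scale1r; apply; apply: (P_rows _ x) (submxMl _ _) => j.
  by rewrite row_id.
apply: (IH _ P_rowsBx).
have ltB : (\rank B < \rank (B + x)%MS)%N.
  apply: rank_ltmx; rewrite ltmxE addsmxSl /=; apply/negP => BxB.
  by move/negP: xNB; apply; apply: submx_trans BxB; apply: addsmxSr.
have := rank_leq_col (B + x)%MS; lia.
Qed.

Lemma exists_basis (V : lmodType F) k (h : 'I_k -> V) :
  exists n (b : 'I_n -> V),
    lin_indep b /\ forall x, span_of h x <-> span_of b x.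
Proof.
have [K HK] : exists K : 'M[F]_k, forall c, lcomb h c = 0 <-> (c <= K)%MS.
  apply: subspace_rowspace => [|a c c' hc hc']; first exact: lin0 (lin_lcomb h).
  by rewrite lin_lcomb hc hc' scaler0 addr0.
pose R := row_base (K^C)%MS.
exists (\rank (K^C)%MS), (fun i => lcomb h (row i R)); split=> [c0 c00 i|x].
  pose c := \row_i c0 i.
  have cR0 : c *m R = 0.
    apply/eqP; rewrite -submx0 -(capmx_compl K) sub_capmx; apply/andP; split.
      by apply/HK; rewrite -lcomb_rows -c00; apply: eq_bigr => j _; rewrite mxE.
    by apply: submx_trans (submxMl c R) _; rewrite eq_row_base.
  have /rowP/(_ i) : c = 0.
    by apply: (row_free_inj (row_base_free (K^C)%MS)); rewrite cR0 mul0mx.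
  by rewrite !mxE.
split=> [[c ->]|[c ->]]; last by exists (c *m R); rewrite lcomb_rows.
have /sub_addsmxP[[u1 u2] /= ->] : (c <= K + K^C)%MS.
  by apply: submx_full; apply: addsmx_compl_full.
have /submxP[w wE] : (u2 *m K^C <= R)%MS by rewrite eq_row_base submxMl.
exists w; rewrite lcomb_rows -wE (linD (lin_lcomb h)).
by rewrite (_ : lcomb h _ = 0) ?add0r //; apply/HK; apply: submxMl.
Qed.

End RowSpaces.

Definition nilpotent_mx (R : pzRingType) n (A : 'M[R]_n) : Prop :=
  exists k, A ^+ k = 0.

Definition has_eigenbasis (K : fieldType) n (A : 'M[K]_n) : Prop :=
  exists2 P : 'M[K]_n, P \in unitmx &
    forall i, exists d, row i P *m A = d *: row i P.

Lemma expr_block_diag (R : pzRingType) n1 n2 (A : 'M[R]_n1) (B : 'M[R]_n2) k :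
  block_mx A 0 0 B ^+ k = block_mx (A ^+ k) 0 0 (B ^+ k).
Proof.
elim: k => [|k IH]; first by rewrite !expr0 -scalar_mx_block.
by rewrite !exprS IH [_ * _]mulmx_block !mulmx0 !mul0mx !addr0 !add0r.
Qed.

Lemma expr_tensmxS (R : comPzRingType) n1 n2 (A : 'M[R]_n1) (B : 'M[R]_n2) k :
  (A *t B) ^+ k.+1 = A ^+ k.+1 *t B ^+ k.+1.
Proof.
elim: k => // k IH; rewrite exprS IH [_ * _]tensmx_mul.
by rewrite -[A *m _]/(A * _) -[B *m _]/(B * _) -!exprS.
Qed.

Lemma nilpotent_mx_exprS (R : pzRingType) n (A : 'M[R]_n) :
  nilpotent_mx A -> exists k, A ^+ k.+1 = 0.
Proof. by move=> [k Ak]; exists k; rewrite exprS Ak mulr0. Qed.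

Lemma nilpotent_block_diag (R : pzRingType) n1 n2 (A : 'M[R]_n1) (B : 'M[R]_n2) :
  nilpotent_mx A -> nilpotent_mx B -> nilpotent_mx (block_mx A 0 0 B).
Proof.
move=> [k1 Ak1] [k2 Bk2]; exists (k1 + k2)%N.
by rewrite expr_block_diag exprD Ak1 [(k1 + k2)%N]addnC exprD Bk2 !mul0r block_mx0.
Qed.

Lemma nilpotent_tensl (R : comPzRingType) n1 n2 (A : 'M[R]_n1) (B : 'M[R]_n2) :
  nilpotent_mx A -> nilpotent_mx (A *t B).
Proof.
by move=> /nilpotent_mx_exprS[k Ak]; exists k.+1; rewrite expr_tensmxS Ak tens0mx.
Qed.

Lemma nilpotent_tensr (R : comPzRingType) n1 n2 (A : 'M[R]_n1) (B : 'M[R]_n2) :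
  nilpotent_mx B -> nilpotent_mx (A *t B).
Proof.
by move=> /nilpotent_mx_exprS[k Bk]; exists k.+1; rewrite expr_tensmxS Bk tensmx0.
Qed.

Lemma nilpotent_addC (R : pzRingType) n (A B : 'M[R]_n) :
  A *m B = B *m A -> nilpotent_mx A -> nilpotent_mx B -> nilpotent_mx (A + B).
Proof.
move=> AB [a Aa] [b Bb]; exists (a + b)%N.
rewrite (exprDn_comm _ (AB : GRing.comm A B)) big1 // => i _.
have [le_bi|lt_ib] := leqP b i.
  by rewrite -(subnKC le_bi) exprD Bb mul0r mulr0 mul0rn.
have le_a : (a <= a + b - i)%N by lia.
by rewrite -(subnKC le_a) exprD Aa !mul0r mul0rn.
Qed.

Lemma map_mxXn (R S : pzRingType) (f : {rmorphism R -> S}) n (A : 'M[R]_n) k :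
  map_mx f (A ^+ k) = map_mx f A ^+ k.
Proof.
elim: k => [|k IH]; first exact: map_mx1.
by rewrite !exprS -IH -[_ * _]/(_ *m _) map_mxM.
Qed.

Lemma diagonalizable_eigenbasis (K : fieldType) n (A : 'M[K]_n) :
  diagonalizable A -> has_eigenbasis A.
Proof.
case=> P Pu /(diagonalizable_forLR Pu)[D AE]; exists P => // i; exists (D 0 i).
rewrite -row_mul AE mxpoly.conjVmx ?unitmx_inv // !mulmxA mulmxV // mul1mx.
by rewrite mul_diag_mx; apply/rowP => j; rewrite !mxE.
Qed.

Lemma eigenbasis_block_diag (K : fieldType) n1 n2 (A : 'M[K]_n1) (B : 'M[K]_n2) :
  has_eigenbasis A -> has_eigenbasis B -> has_eigenbasis (block_mx A 0 0 B).
Proof.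
move=> [P1 P1u P1A] [P2 P2u P2B]; exists (block_mx P1 0 0 P2).
  by rewrite unitmxE det_ublock unitrM -!unitmxE P1u P2u.
move=> i; rewrite block_mxEv; case: (splitP i) => j ij.
  have -> : i = lshift n2 j by apply/val_inj.
  rewrite rowKu row_row_mx row0; have [d Ad] := P1A j; exists d.
  by rewrite mul_row_block !mulmx0 !mul0mx !addr0 Ad scale_row_mx scaler0.
have -> : i = rshift n1 j by apply/val_inj.
rewrite rowKd row_row_mx row0; have [d Bd] := P2B j; exists d.
by rewrite mul_row_block !mulmx0 !mul0mx !add0r Bd scale_row_mx scaler0.
Qed.

Lemma row_tensmx (R : comPzRingType) m1 m2 n1 n2
    (A : 'M[R]_(m1, n1)) (B : 'M[R]_(m2, n2)) i j :
  row (mxtens_index (i, j)) (A *t B) = row i A *t row j B.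
Proof.
apply/rowP => l; case: (mxtens_indexP l) => k1 k2.
by rewrite !mxE !mxtens_indexK.
Qed.

Lemma eigenbasis_tens (K : fieldType) n1 n2 (A : 'M[K]_n1) (B : 'M[K]_n2) :
  has_eigenbasis A -> has_eigenbasis B -> has_eigenbasis (A *t B).
Proof.
case: n1 A => [|n1] A; first by exists 1%:M; [exact: unitmx1 | case].
case: n2 B => [|n2] B.
  by exists 1%:M => [|[i lt_i]]; [exact: unitmx1 | exfalso; rewrite muln0 in lt_i].
move=> [P1 P1u P1A] [P2 P2u P2B]; exists (P1 *t P2); first exact: tensmx_unit.
move=> k; case: (mxtens_indexP k) => i j; rewrite row_tensmx.
have [d1 Ad1] := P1A i; have [d2 Bd2] := P2B j; exists (d1 * d2).
rewrite (tensmx_mul (row i P1) (row j P2) A B) Ad1 Bd2; apply/matrixP => r l.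
case: (mxtens_indexP l) => k1 k2.
by rewrite !mxE !mxtens_indexK mulrACA.
Qed.

Lemma eigenvector_exprB (R : comPzRingType) n (M S : 'M[R]_n) (y : 'rV[R]_n) a k :
  S *m M = M *m S -> y *m S = a *: y ->
  y *m (M - a%:M) ^+ k = y *m (M - S) ^+ k.
Proof.
move=> SM yS; have cS : GRing.comm S (M - S).
  by rewrite /GRing.comm mulrBr mulrBl; congr (_ - _).
elim: k => [|k IH]; first by rewrite !expr0.
have NkS : y *m (M - S) ^+ k *m S = a *: (y *m (M - S) ^+ k).
  rewrite -mulmxA -[_ *m S]/(_ * S) -(commrX k cS) -[S * _]/(S *m _).
  by rewrite mulmxA yS scalemxAl.
by rewrite !exprSr !mulmxA IH !mulmxBr NkS mul_mx_scalar.
Qed.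

Lemma eigenbasis_horner_mx (K : fieldType) n (M S : 'M[K]_n.+1) :
  S *m M = M *m S -> nilpotent_mx (M - S) -> has_eigenbasis S ->
  exists p : {poly K}, S = horner_mx M p.
Proof.
move=> SM [k Nk] [P Pu /fin_all_exists[d dP]].
pose L := undup (codom d).
have dL i : d i \in L by rewrite mem_undup codom_f.
pose Q x := \prod_(y <- L | y != x) ('X - y%:P) ^+ k.
have /all_sig[uv uvP] x : {uv : {poly K} * {poly K} |
    uv.1 * ('X - x%:P) ^+ k + uv.2 * Q x = 1}.
  apply: sig_eqW; apply/Bezout_eq1_coprimepP.
  apply: (big_ind (coprimep _)); first exact: coprimep1.
    by move=> p q; rewrite coprimepMr => -> ->.
  move=> y yNx; apply: coprimep_expl; apply: coprimep_expr.
  by rewrite coprimep_XsubC root_XsubC.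
(* [E x] is 1 modulo ('X - x)^k and 0 modulo ('X - y)^k for the other
   eigenvalues y, so [horner_mx M (E x)] projects onto the x-eigenrows of P. *)
pose E x := (uv x).2 * Q x.
have kill i p : row i P *m horner_mx M (('X - (d i)%:P) ^+ k * p) = 0.
  rewrite rmorphM /= mulmxA rmorphXn rmorphB /= horner_mx_X horner_mx_C.
  by rewrite (eigenvector_exprB _ SM (dP i)) Nk mulmx0 mul0mx.
have EP i x : row i P *m horner_mx M (E x) = (x == d i)%:R *: row i P.
  have [->|xNd] := eqVneq x (d i).
    have -> : E (d i) = 1 - ('X - (d i)%:P) ^+ k * (uv (d i)).1.
      by rewrite -(uvP (d i)) (mulrC (uv (d i)).1) [X in X - _]addrC addrK.
    by rewrite rmorphB /= rmorph1 mulmxBr mulmx1 kill subr0 scale1r.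
  rewrite /E /Q -big_filter.
  rewrite (bigD1_seq (d i)) ?filter_uniq ?undup_uniq //=; last first.
    by rewrite mem_filter eq_sym xNd dL.
  by rewrite mulrCA kill scale0r.
exists (\sum_(x <- L) x *: E x).
apply: (can_inj (mulKmx Pu)); apply/row_matrixP => i.
rewrite !row_mul dP rmorph_sum mulmx_sumr /=.
rewrite (eq_bigr (fun x => (x * (x == d i)%:R) *: row i P)); last first.
  by move=> x _; rewrite linearZ /= -scalemxAr EP scalerA.
rewrite -scaler_suml (bigD1_seq _ (dL i) (undup_uniq _)) /= eqxx mulr1.
by rewrite big1_seq ?addr0 // => x /andP[/negPf ->]; rewrite mulr0.
Qed.

Section SemisimplePart.
Variables (F K : fieldType) (iota : {rmorphism F -> K}).
Local Notation "A ^f" := (map_mx iota A) : ring_scope.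

Definition ss_part n (M S : 'M[F]_n) : Prop :=
  [/\ S *m M = M *m S, nilpotent_mx (M - S) & has_eigenbasis S^f].

Lemma ss_part_stable m n (M S : 'M[F]_n) (B : 'M[F]_(m, n)) :
  ss_part M S -> stablemx B M -> stablemx B S.
Proof.
case: n M S B => [|n] M S B; first by rewrite [B *m S]thinmx0 sub0mx.
case: m B => [|m] B; first by rewrite [B *m S]flatmx0 sub0mx.
move=> [SM [k Nk] eigS] BM.
have SMf : S^f *m M^f = M^f *m S^f by rewrite -!map_mxM SM.
have Nkf : nilpotent_mx (M^f - S^f).
  by exists k; rewrite -map_mxB -map_mxXn Nk map_mx0.
have [p Sp] := eigenbasis_horner_mx SMf Nkf eigS.
rewrite -(map_submx iota) map_mxM Sp; apply: horner_mx_stable.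
by rewrite -map_mxM map_submx.
Qed.

Lemma ss_part_block_diag n1 n2 (M1 S1 : 'M[F]_n1) (M2 S2 : 'M[F]_n2) :
  ss_part M1 S1 -> ss_part M2 S2 ->
  ss_part (block_mx M1 0 0 M2) (block_mx S1 0 0 S2).
Proof.
move=> [SM1 N1 eig1] [SM2 N2 eig2]; split.
- by rewrite !mulmx_block !mulmx0 !mul0mx !addr0 !add0r SM1 SM2.
- by rewrite opp_block_mx add_block_mx !oppr0 !addr0; apply: nilpotent_block_diag.
- by rewrite map_block_mx !map_mx0; apply: eigenbasis_block_diag.
Qed.

Lemma ss_part_tens n1 n2 (M1 S1 : 'M[F]_n1) (M2 S2 : 'M[F]_n2) :
  ss_part M1 S1 -> ss_part M2 S2 -> ss_part (M1 *t M2) (S1 *t S2).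
Proof.
move=> [SM1 N1 eig1] [SM2 N2 eig2]; split.
- by rewrite !tensmx_mul SM1 SM2.
- have -> : M1 *t M2 - S1 *t S2 = S1 *t (M2 - S2) + (M1 - S1) *t M2.
    by apply/matrixP => i j; rewrite !mxE mulrBr mulrBl [RHS]addrC addrA subrK.
  apply: nilpotent_addC; last 2 first.
  + exact: nilpotent_tensr.
  + exact: nilpotent_tensl.
  by rewrite !tensmx_mul mulmxBr mulmxBl SM1 mulmxBr mulmxBl SM2.
- by rewrite map_mxT; apply: eigenbasis_tens.
Qed.

Lemma ss_part1 n : ss_part (1%:M : 'M[F]_n) 1%:M.
Proof.
split=> //; first by exists 1%N; rewrite subrr expr1.
by exists 1%:M => [|i]; [exact: unitmx1 | exists 1; rewrite map_mx1 mulmx1 scale1r].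
Qed.

(* The pairs [(c1, c2)] with [E1 c1 = E2 c2] form a subspace stable under
   [M1 (+) M2], hence under its semisimple part [S1 (+) S2]. *)
Lemma ss_part_intertwine (W : lmodType F) (mW : W -> W) n1 n2
    (E1 : 'rV[F]_n1 -> W) (E2 : 'rV[F]_n2 -> W)
    (M1 S1 : 'M[F]_n1) (M2 S2 : 'M[F]_n2) :
  lin E1 -> lin E2 ->
  (forall c, E1 (c *m M1) = mW (E1 c)) -> (forall c, E2 (c *m M2) = mW (E2 c)) ->
  ss_part M1 S1 -> ss_part M2 S2 ->
  forall c1 c2, E1 c1 = E2 c2 -> E1 (c1 *m S1) = E2 (c2 *m S2).
Proof.
move=> hE1 hE2 E1M E2M ss1 ss2 c1 c2 E12.
pose P (z : 'rV[F]_(n1 + n2)) := E1 (lsubmx z) = E2 (rsubmx z).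
have [B PB] : exists B : 'M_(n1 + n2), forall z, P z <-> (z <= B)%MS.
  apply: subspace_rowspace => [|a z z' Pz Pz'].
    by rewrite /P !linear0 (lin0 hE1) (lin0 hE2).
  by rewrite /P !linearP /= hE1 hE2 Pz Pz'.
have PzM z : P z -> P (z *m block_mx M1 0 0 M2).
  rewrite /P -[z]hsubmxK mul_row_block !mulmx0 !addr0 !add0r.
  by rewrite !row_mxKl !row_mxKr E1M E2M => ->.
have BS : stablemx B (block_mx S1 0 0 S2).
  apply: ss_part_stable (ss_part_block_diag ss1 ss2) _.
  by apply/row_subP => i; rewrite row_mul; apply/PB/PzM/PB/row_sub.
have /PB : P (row_mx c1 c2) by rewrite /P row_mxKl row_mxKr.
move=> /(submxMr (block_mx S1 0 0 S2))/submx_trans/(_ BS)/PB.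
by rewrite /P mul_row_block !mulmx0 !addr0 !add0r row_mxKl row_mxKr.
Qed.

End SemisimplePart.

Section FiniteModels.
Variables (F : fieldType) (V : lmodType F).

Lemma locally_nilpotent_uniform (f : V -> V) (l : seq V) :
  lin f -> locally_nilpotent f -> exists N, forall z, z \in l -> iter N f z = 0.
Proof.
move=> hf nilf; elim: l => [|z l [N IH]]; first by exists 0%N.
have [k fk] := nilf z; exists (maxn k N) => y; rewrite in_cons => /predU1P[->|yl].
  exact: iter_lin_ge hf fk (leq_maxl _ _).
exact: iter_lin_ge hf (IH y yl) (leq_maxr _ _).
Qed.

Lemma span_of_matrix n (b : 'I_n -> V) (y : V -> V) :
  (forall i, span_of b (y (b i))) ->
  exists A : 'M[F]_n, forall i, y (b i) = \sum_j A i j *: b j.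
Proof.
move=> /fin_all_exists[r yb]; exists (\matrix_(i, j) r i 0 j) => i.
by rewrite yb; apply: eq_bigr => j _; rewrite mxE.
Qed.

Lemma stable_finite_span (m s : V -> V) x :
  lin m -> lin s -> (forall v, m (s v) = s (m v)) -> locally_finite s ->
  locally_nilpotent (fun v => m v - s v) ->
  exists l : seq V, [/\ span_of (seqfam l) x,
    forall i, span_of (seqfam l) (m (seqfam l i)) &
    forall i, span_of (seqfam l) (s (seqfam l i))].
Proof.
move=> hm hs ms lfs nil_ms; pose nn v := m v - s v.
have hnn : lin nn by apply: lin_subf.
have snn j v : s (iter j nn v) = iter j nn (s v).
  by elim: j => //= j <-; rewrite /nn (linB hs) ms.
have [t [xt st]] := lfs x.
have st' z : z \in t -> span_of (seqfam t) (s z).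
  move=> zt; rewrite -(nth_index 0 zt).
  by apply/in_span_span_of/st; rewrite index_mem.
have [N nnN] := locally_nilpotent_uniform t hnn nil_ms.
pose l := [seq iter j nn z | z <- t, j <- iota 0 N.+1].
have in_l z j : z \in t -> (j <= N)%N -> iter j nn z \in l.
  by move=> zt jN; apply/allpairsP; exists (z, j); rewrite mem_iota ltnS.
have span_l z j : z \in t -> span_of (seqfam l) (iter j nn z).
  move=> zt; have [jN|Nj] := leqP j N; first exact/span_of_mem/in_l.
  by rewrite (iter_lin_ge hnn (nnN z zt) (ltnW Nj)); apply: span_of0.
have sl i : span_of (seqfam l) (s (seqfam l i)).
  have /allpairsP[[z j] [zt _ /= li]] := mem_nth 0 (ltn_ord i).
  rewrite [seqfam l i]li snn; have [c ->] := st' z zt.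
  rewrite map_lcomb; last exact: lin_iter.
  by apply: span_of_lcomb => k; apply/span_l/mem_nth.
have nnl i : span_of (seqfam l) (nn (seqfam l i)).
  have /allpairsP[[z j] [zt _ /= li]] := mem_nth 0 (ltn_ord i).
  by rewrite [seqfam l i]li -iterS; apply: span_l.
exists l; split=> // [|i].
  apply: span_of_trans (in_span_span_of xt) => i.
  by apply: (span_l _ 0%N); apply: mem_nth.
by rewrite -[m _](subrK (s (seqfam l i))); apply: span_ofD; [exact: nnl | exact: sl].
Qed.

End FiniteModels.

Section Models.
Variables (F K : fieldType) (iota : {rmorphism F -> K}).

Definition ss_model (V : lmodType F) (m s : V -> V) (x : V) : Prop :=
  exists n (b : 'I_n -> V) (c : 'rV[F]_n) (M S : 'M[F]_n),
    [/\ x = lcomb b c, forall c, lcomb b (c *m M) = m (lcomb b c),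
        forall c, lcomb b (c *m S) = s (lcomb b c) & ss_part iota M S].

Lemma ss_model_of_commuting (V : lmodType F) (m s : V -> V) x :
  lin m -> lin s -> (forall v, m (s v) = s (m v)) -> semisimple iota s ->
  locally_nilpotent (fun v => m v - s v) -> ss_model m s x.
Proof.
move=> hm hs ms [lfs diag_s] nil_ms.
have [l [xl ml sl]] := stable_finite_span x hm hs ms lfs nil_ms.
have [n [b [b_free lb]]] := exists_basis (seqfam l).
have b_stable f : lin f -> (forall i, span_of (seqfam l) (f (seqfam l i))) ->
    forall i, span_of b (f (b i)).
  by move=> hf fl i; apply/lb/(span_of_stable hf fl)/lb/span_of_self.
have [M bM] := span_of_matrix (b_stable m hm ml).
have [S bS] := span_of_matrix (b_stable s hs sl).
have [c xc] := (lb x).1 xl.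
have bMc := lcomb_mulmx hm bM; have bSc := lcomb_mulmx hs bS.
have bNc j c' :
    lcomb b (c' *m (M - S) ^+ j) = iter j (fun v => m v - s v) (lcomb b c').
  elim: j => [|j IH]; first by rewrite expr0 mulmx1.
  by rewrite exprSr mulmxA mulmxBr (linB (lin_lcomb b)) -bMc -bSc IH.
exists n, b, c, M, S; split=> //; try by move=> c'; rewrite ?bMc ?bSc.
split.
- apply/row_matrixP => i; rewrite !rowE; apply: (lcomb_inj b_free).
  by rewrite !mulmxA -!bMc -!bSc -bMc ms.
- have [N bN] := locally_nilpotent_uniform (codom b) (lin_subf hm hs) nil_ms.
  exists N; apply/row_matrixP => i; rewrite row0 rowE; apply: (lcomb_inj b_free).
  by rewrite bNc lcomb_delta bN ?codom_f // (lin0 (lin_lcomb b)).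
- exact/diagonalizable_eigenbasis/(diag_s n b S b_free bS).
Qed.

End Models.

Definition tens_fam (F : fieldType) (V W T : lmodType F) (t : V -> W -> T)
    n1 n2 (b1 : 'I_n1 -> V) (b2 : 'I_n2 -> W) (k : 'I_(n1 * n2)) : T :=
  t (b1 (mxtens_unindex k).1) (b2 (mxtens_unindex k).2).

Lemma lcomb_tens_fam (F : fieldType) (V W T : lmodType F) (t : V -> W -> T)
    n1 n2 (b1 : 'I_n1 -> V) (b2 : 'I_n2 -> W) (c1 : 'rV[F]_n1) (c2 : 'rV[F]_n2) :
  (forall w, lin (fun v => t v w)) -> (forall v, lin (t v)) ->
  lcomb (tens_fam t b1 b2) (c1 *t c2) = t (lcomb b1 c1) (lcomb b2 c2).
Proof.
move=> tl tr; rewrite /lcomb (lin_sum _ _ _ (tl _)).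
under [RHS]eq_bigr => i _ do rewrite (linZ (tl _)) (lin_sum _ _ _ (tr _)) scaler_sumr.
rewrite pair_big /= (reindex (@mxtens_index n1 n2)); last first.
  exists (@mxtens_unindex n1 n2) => k _.
  - exact: mxtens_indexK.
  - exact: mxtens_unindexK.
apply: eq_bigr => -[i j] _; rewrite /tens_fam !mxE !mxtens_indexK /= !ord1.
by rewrite (linZ (tr _)) scalerA.
Qed.

Section ModelTransport.
Variables (F K : fieldType) (iota : {rmorphism F -> K}).
Local Notation ss_model := (ss_model iota).

Lemma ss_model_intertwine (V W : lmodType F) (mV sV : V -> V) (mW sW : W -> W)
    (al : V -> W) :
  lin al -> (forall v, al (mV v) = mW (al v)) ->
  (forall x, ss_model mV sV x) -> (forall y, ss_model mW sW y) ->
  forall x, al (sV x) = sW (al x).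
Proof.
move=> hal alm modV modW x.
have [n1 [b1 [c1 [M1 [S1 [-> b1M b1S ss1]]]]]] := modV x.
have [n2 [b2 [c2 [M2 [S2 [xc2 b2M b2S ss2]]]]]] := modW (al (lcomb b1 c1)).
rewrite -b1S xc2 -b2S.
apply: (ss_part_intertwine (lin_comp hal (lin_lcomb b1)) (lin_lcomb b2) _ _ ss1 ss2).
- by move=> c; rewrite b1M alm.
- by move=> c; rewrite b2M.
- exact: xc2.
Qed.

Lemma ss_model_tensor (V W T : lmodType F) (t : V -> W -> T)
    (mV sV : V -> V) (mW sW : W -> W) (mT sT : T -> T) :
  (forall w, lin (fun v => t v w)) -> (forall v, lin (t v)) -> lin mT ->
  (forall v w, mT (t v w) = t (mV v) (mW w)) ->
  (forall x, ss_model mV sV x) -> (forall y, ss_model mW sW y) ->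
  (forall z, ss_model mT sT z) ->
  forall v w, sT (t v w) = t (sV v) (sW w).
Proof.
move=> tl tr hmT mTt modV modW modT v w.
have [n1 [b1 [c1 [M1 [S1 [vc b1M b1S ss1]]]]]] := modV v.
have [n2 [b2 [c2 [M2 [S2 [wc b2M b2S ss2]]]]]] := modW w.
have [n3 [b3 [c3 [M3 [S3 [tc b3M b3S ss3]]]]]] := modT (t v w).
pose G := tens_fam t b1 b2.
have GM c : lcomb G (c *m (M1 *t M2)) = mT (lcomb G c).
  rewrite -lcomb_rows map_lcomb //; apply: eq_bigr => k _; congr (_ *: _).
  case: (mxtens_indexP k) => i j; rewrite row_tensmx lcomb_tens_fam // mTt.
  rewrite /G /tens_fam mxtens_indexK /= !rowE.
  by rewrite -[b1 i]lcomb_delta -[b2 j]lcomb_delta b1M b2M.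
have Gtc : lcomb G (c1 *t c2) = lcomb b3 c3 by rewrite lcomb_tens_fam // -vc -wc.
have := ss_part_intertwine (lin_lcomb G) (lin_lcomb b3) GM b3M
  (ss_part_tens ss1 ss2) ss3 Gtc.
by rewrite (tensmx_mul c1 c2 S1 S2) lcomb_tens_fam // b1S b2S b3S -vc -wc -tc.
Qed.

Lemma ss_model_id (V : lmodType F) (y : V) : ss_model id id y.
Proof.
exists 1%N, (fun _ => y), 1%:M, 1%:M, 1%:M; split=> [|c|c|]; last exact: ss_part1.
- by rewrite /lcomb big_ord1 mxE scale1r.
- by rewrite mulmx1.
- by rewrite mulmx1.
Qed.

End ModelTransport.

Section JordanInEndf.
Variables (F : fieldType) (V : lmodType F).

Lemma iter_commute (f h : V -> V) k v :
  (forall v, f (h v) = h (f v)) -> f (iter k h v) = iter k h (f v).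
Proof. by move=> fh; elim: k => //= k IH; rewrite fh IH. Qed.

(* [m - s = s (u - e)], and [u - e] kills [ker u] and is [u - 1] on [Im u]. *)
Lemma JC_locally_nilpotent (e m s u : V -> V) :
  unit_End_f e s -> unit_End_f e u -> locally_weak_unipotent u ->
  (forall v, m v = s (u v) /\ m v = u (s v)) ->
  locally_nilpotent (fun v => m v - s v).
Proof.
move=> [hs [se _]] [hu [ue [z [hz [_ zu]]]]] [_ [_ [ker_im [_ [_ nil_u]]]]] msu v.
have eE x : e x = z (u x) by rewrite (proj2 (zu x)).
have he : lin e by move=> a x y; rewrite !eE hu hz.
pose w x := u x - e x.
have hw : lin w by apply: lin_subf.
have msw x : m x - s x = s (w x).
  by rewrite (proj1 (msu x)) (linB hs) (proj1 (se x)).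
have sw x : s (w x) = w (s x).
  rewrite /w (linB hs) (proj1 (se x)) (proj2 (se x)).
  by rewrite -(proj1 (msu x)) (proj2 (msu x)).
have msk k x : iter k (fun v => m v - s v) x = iter k s (iter k w x).
  by elim: k x => //= k IH x; rewrite IH msw iter_commute.
have [k0 [w0 [k0u [[y w0y] ->]]]] := ker_im v.
have wk0 : w k0 = 0 by rewrite /w eE k0u (lin0 hz) subrr.
have ew0 : e w0 = w0 by rewrite w0y (proj2 (ue y)).
have [k nil_w0] := nil_u w0 (ex_intro _ y w0y).
have iter_w j :
    iter j w w0 = iter j (fun v => u v - v) w0 /\ e (iter j w w0) = iter j w w0.
  elim: j => [|j [IH1 IH2]] //=; rewrite IH1 in IH2 *.
  by rewrite /w IH2 (linB he) (proj2 (ue _)) IH2.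
exists k.+1; rewrite msk (linD (lin_iter _ hw)) [iter k.+1 w k0]iterSr wk0.
rewrite (lin0 (lin_iter _ hw)) add0r [iter k.+1 w w0]iterS (proj1 (iter_w k)).
by rewrite nil_w0 (lin0 hw) (lin0 (lin_iter _ hs)).
Qed.

Lemma commute_inv (f m mi y : V -> V) :
  (forall v, y (f v) = y v) -> (forall v, f (y v) = y v) ->
  (forall v, m (mi v) = f v) -> (forall v, mi (m v) = f v) ->
  (forall v, m (y v) = y (m v)) -> forall v, y (mi v) = mi (y v).
Proof. by move=> yf fy mmi mim my v; rewrite -fy -mim my mmi yf. Qed.

End JordanInEndf.

Lemma unit_End_f_inj (F : fieldType) (V : lmodType F) (f y : V -> V) a b :
  unit_End_f f y -> f a = a -> f b = b -> y a = y b -> a = b.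
Proof.
move=> [_ [_ [z [_ [_ yz]]]]] fa fb yab.
by rewrite -fa -(proj2 (yz a)) yab (proj2 (yz b)) fb.
Qed.

Section JordanChevalley.
Variables (F K : fieldType) (iota : {rmorphism F -> K}).

Definition JC_decomp (V : lmodType F) (e m s u : V -> V) : Prop :=
  [/\ semisimple iota s, unit_End_f e s, locally_weak_unipotent u,
      unit_End_f e u & forall v, m v = s (u v) /\ m v = u (s v)].

Lemma JC_lin (V : lmodType F) (e m s u : V -> V) : JC_decomp e m s u -> lin m.
Proof.
by move=> [_ [hs _] _ [hu _] msu] a y y'; rewrite !(proj1 (msu _)) hu hs.
Qed.

Lemma JC_ss_model (V : lmodType F) (e m s u : V -> V) x :
  JC_decomp e m s u -> ss_model iota m s x.
Proof.
move=> jc; have [ss_s es lwu_u eu msu] := jc.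
apply: ss_model_of_commuting (JC_lin jc) es.1 _ ss_s
  (JC_locally_nilpotent es eu lwu_u msu).
by move=> v; rewrite (proj1 (msu (s v))) (proj2 (msu v)).
Qed.

Lemma JC_intertwine (V W : lmodType F) (eV mV sV uV : V -> V)
    (eW mW sW uW : W -> W) (al : V -> W) :
  JC_decomp eV mV sV uV -> JC_decomp eW mW sW uW -> lin al ->
  (forall v, al (mV v) = mW (al v)) -> (forall v, al (eV v) = eW (al v)) ->
  forall v, al (sV v) = sW (al v) /\ al (uV v) = uW (al v).
Proof.
move=> jcV jcW hal alm ale v.
have als x : al (sV x) = sW (al x).
  apply: (ss_model_intertwine hal alm) => y; apply: JC_ss_model.
  - exact: jcV.
  - exact: jcW.
have [_ _ _ [_ [euV _]] msuV] := jcV; have [_ esW _ [_ [euW _]] msuW] := jcW.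
split=> //; apply: (unit_End_f_inj esW).
- by rewrite -ale (proj2 (euV v)).
- exact: (proj2 (euW _)).
- by rewrite -als -(proj1 (msuV v)) alm (proj1 (msuW _)).
Qed.

Lemma JC_tensor (V W T : lmodType F) (t : V -> W -> T)
    (eV mV sV uV : V -> V) (eW mW sW uW : W -> W) (eT mT sT uT : T -> T) :
  JC_decomp eV mV sV uV -> JC_decomp eW mW sW uW -> JC_decomp eT mT sT uT ->
  (forall w, lin (fun v => t v w)) -> (forall v, lin (t v)) ->
  (forall v w, mT (t v w) = t (mV v) (mW w)) ->
  (forall v w, eT (t v w) = t (eV v) (eW w)) ->
  forall v w, sT (t v w) = t (sV v) (sW w) /\ uT (t v w) = t (uV v) (uW w).
Proof.
move=> jcV jcW jcT tl tr mTt eTt v w.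
have sTt v' w' : sT (t v' w') = t (sV v') (sW w').
  exact: (ss_model_tensor tl tr (JC_lin jcT) mTt (fun x => JC_ss_model x jcV)
    (fun x => JC_ss_model x jcW) (fun x => JC_ss_model x jcT)).
have [_ _ _ [_ [euV _]] msuV] := jcV; have [_ _ _ [_ [euW _]] msuW] := jcW.
have [_ esT _ [_ [euT _]] msuT] := jcT.
split=> //; apply: (unit_End_f_inj esT).
- exact: (proj2 (euT _)).
- by rewrite eTt (proj2 (euV v)) (proj2 (euW w)).
- by rewrite -(proj1 (msuT _)) mTt sTt -(proj1 (msuV v)) -(proj1 (msuW w)).
Qed.

Lemma JC_identity (V : lmodType F) (e m s u : V -> V) :
  JC_decomp e m s u -> (forall v, m v = v) -> forall v, s v = v /\ u v = v.
Proof.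
move=> jc m1 v; have [_ _ _ _ msu] := jc.
have sv : s v = v.
  have lin_id : lin (@id V) by [].
  apply: (@ss_model_intertwine _ _ iota _ _ m s id id id lin_id m1) => [x|].
    exact: JC_ss_model jc.
  exact: ss_model_id.
by split=> //; rewrite -{1}sv -(proj2 (msu v)) m1.
Qed.

Lemma JC_unique (V : lmodType F) (e m s u s' u' : V -> V) :
  JC_decomp e m s u -> JC_decomp e m s' u' -> forall v, s' v = s v /\ u' v = u v.
Proof. by move=> jc jc' v; apply: (JC_intertwine (al := id) jc' jc). Qed.

End JordanChevalley.

Section MonoidM.
Variables (F : fieldType) (g : lmodType F) (C : gmodule g -> Prop)
  (du : dual_family g).
Implicit Types (e m x y : gfamily g).

Lemma in_M_comp x y :
  in_M C du x -> in_M C du y -> in_M C du (fun V v => x V (y V v)).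
Proof.
move=> [[xE xN] [xT xV]] [[yE yN] [yT yV]]; split; [split|split].
- move=> V CV; have [hx dx] := xE V CV; have [hy dy] := yE V CV.
  by split; [apply: lin_comp hx hy | move=> phi /dx /dy].
- by move=> V W al CV CW hal v; rewrite (xN V W al) ?(yN V W al).
- by move=> V W T t CV CW CT ht v w; rewrite (yT V W T t) // (xT V W T t).
- by move=> V0 CV0 tr v; rewrite (yV V0) // (xV V0).
Qed.

Lemma unit_Me_End e x V : C V -> unit_Me C du e x -> unit_End_f (e V) (x V).
Proof.
move=> CV [[xM xe] [y [[yM ye] xy]]].
split; first exact: (xM.1.1 V CV).1.
split; first exact: xe.
by exists (y V); split; [exact: (yM.1.1 V CV).1 | split; [exact: ye | exact: xy]].
Qed.

(* The inverse of [x] is [y m^-1]. *)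
Lemma unit_Me_factor e m x y :
  unit_Me C du e m -> in_Me C du e x -> in_Me C du e y ->
  (forall V, C V -> forall v, m V v = x V (y V v) /\ m V v = y V (x V v)) ->
  unit_Me C du e x.
Proof.
move=> [_ [mi [[miM mie] mmi]]] xMe [yM ye] mxy; split=> //.
have [_ xe] := xMe.
exists (fun V v => y V (mi V v)); split; first split.
- exact: in_M_comp.
- by move=> V CV v; rewrite (proj1 (mie V CV v)) (proj2 (ye V CV _)).
move=> V CV v; have mi_x : forall v, x V (mi V v) = mi V (x V v).
  apply: (commute_inv (f := e V) (m := m V)) => [w|w|w|w|w].
  - exact: (proj1 (xe V CV w)).
  - exact: (proj2 (xe V CV w)).
  - exact: (proj1 (mmi V CV w)).
  - exact: (proj2 (mmi V CV w)).
  - by rewrite (proj1 (mxy V CV _)) (proj2 (mxy V CV w)).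
split; first by rewrite -(proj1 (mxy V CV _)) (proj1 (mmi V CV v)).
by rewrite -mi_x -(proj2 (mxy V CV _)) (proj1 (mmi V CV v)).
Qed.

End MonoidM.

Section JordanChevalleyInM.
Variables (F K : fieldType) (iota : {rmorphism F -> K}) (g : lmodType F)
  (C : gmodule g -> Prop) (du : dual_family g).

Lemma JC_parts_in_M (e m s u : gfamily g) :
  in_M C du e -> unit_Me C du e m ->
  (forall V, C V -> JC_decomp iota (e V) (m V) (s V) (u V)) ->
  (forall V, C V -> End_du du V (s V) /\ End_du du V (u V)) ->
  in_M C du s /\ in_M C du u.
Proof.
move=> e_M m_unit su_JC su_du.
have [[_ e_nat] [e_ten _]] := e_M.
have [[[[_ m_nat] [m_ten m_triv]] _] _] := m_unit.
have nat_su V W al : C V -> C W -> is_hom al ->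
    forall v, al (s V v) = s W (al v) /\ al (u V v) = u W (al v).
  move=> CV CW hal; apply: (JC_intertwine (su_JC V CV) (su_JC W CW) (proj1 hal)).
  - exact: m_nat V W al CV CW hal.
  - exact: e_nat V W al CV CW hal.
have ten_su V W T t : C V -> C W -> C T -> @is_tensor _ _ V W T t ->
    forall v w, s T (t v w) = t (s V v) (s W w) /\ u T (t v w) = t (u V v) (u W w).
  move=> CV CW CT ht; have [tl [tr _]] := ht.
  apply: (JC_tensor (su_JC V CV) (su_JC W CW) (su_JC T CT) tl tr).
  - exact: m_ten V W T t CV CW CT ht.
  - exact: e_ten V W T t CV CW CT ht.
have triv_su V0 : C V0 -> trivial_1dim V0 -> forall v, s V0 v = v /\ u V0 v = v.
  by move=> CV0 tr; apply: (JC_identity (su_JC V0 CV0) (m_triv V0 CV0 tr)).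
split; split; [split|split|split|split].
- by move=> V /su_du[].
- by move=> V W al CV CW hal v; case: (nat_su V W al CV CW hal v).
- by move=> V W T t CV CW CT ht v w; case: (ten_su V W T t CV CW CT ht v w).
- by move=> V0 CV0 tr v; case: (triv_su V0 CV0 tr v).
- by move=> V /su_du[].
- by move=> V W al CV CW hal v; case: (nat_su V W al CV CW hal v).
- by move=> V W T t CV CW CT ht v w; case: (ten_su V W T t CV CW CT ht v w).
- by move=> V0 CV0 tr v; case: (triv_su V0 CV0 tr v).
Qed.

Lemma JC_parts_unit_Me (e m s u : gfamily g) :
  in_M C du e -> unit_Me C du e m ->
  (forall V, C V -> JC_decomp iota (e V) (m V) (s V) (u V)) ->
  (forall V, C V -> End_du du V (s V) /\ End_du du V (u V)) ->
  unit_Me C du e s /\ unit_Me C du e u.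
Proof.
move=> e_M m_unit su_JC su_du.
have [s_M u_M] := JC_parts_in_M e_M m_unit su_JC su_du.
have s_Me : in_Me C du e s by split=> // V /su_JC[_ [_ []]].
have u_Me : in_Me C du e u by split=> // V /su_JC[_ _ _ [_ []]].
split; [apply: (unit_Me_factor m_unit s_Me u_Me) |
        apply: (unit_Me_factor m_unit u_Me s_Me)] => V /su_JC[_ _ _ _ msu] v.
- exact: msu.
- by have [? ?] := msu v.
Qed.

End JordanChevalleyInM.

Theorem theorem2p19
  (F : fieldType) (charF0 : [pchar F] =i pred0)
  (* an algebraic closure iota : F -> Fbar, used to define semisimplicity *)
  (Fbar : closedFieldType) (iota : {rmorphism F -> Fbar})
  (Fbar_alg : forall z : Fbar, exists p : {poly F},
      p != 0 /\ root (map_poly iota p) z)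
  (g : lmodType F) (br : g -> g -> g) (g_lie : is_lie_algebra br)
  (C : gmodule g -> Prop) (C_cat : is_category br C)
  (du : dual_family g) (du_duals : is_category_of_duals C du)
  (e : gfamily g) (e_idem : idempotent_M C du e)
  (m : gfamily g) (m_unit : unit_Me C du e m) (m_lf : locally_finite_M C m)
  (s u : gfamily g)
  (* s_V, u_V are the semisimple and locally weak unipotent parts of the
     multiplicative Jordan-Chevalley decomposition of m_V in End(V)_{e_V} *)
  (su_JC : forall V, C V ->
      [/\ semisimple iota (s V), unit_End_f (e V) (s V),
          locally_weak_unipotent (u V), unit_End_f (e V) (u V)
        & forall v, m V v = s V (u V v) /\ m V v = u V (s V v)])
  (su_du : forall V, C V -> End_du du V (s V) /\ End_du du V (u V)) :
  [/\ unit_Me C du e s /\ semisimple_M iota C s,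
      unit_Me C du e u /\ locally_weak_unipotent_M C u,
      (forall V, C V -> forall v, m V v = s V (u V v) /\ m V v = u V (s V v))
    & forall s' u' : gfamily g,
        unit_Me C du e s' -> semisimple_M iota C s' ->
        unit_Me C du e u' -> locally_weak_unipotent_M C u' ->
        (forall V, C V -> forall v, m V v = s' V (u' V v) /\ m V v = u' V (s' V v)) ->
        forall V, C V -> forall v, s' V v = s V v /\ u' V v = u V v].
Proof.
have [s_unit u_unit] := JC_parts_unit_Me e_idem.1 m_unit su_JC su_du.
split=> [||V /su_JC[] //|s' u' s'_unit s'_ss u'_unit u'_lwu msu' V CV v].
- by split=> // V /su_JC[].
- by split=> // V /su_JC[].
apply: (JC_unique (su_JC V CV)); split.
- exact: s'_ss.
- exact: unit_Me_End s'_unit.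
- exact: u'_lwu.
- exact: unit_Me_End u'_unit.
- exact: msu'.
Qed.
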